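(* Let $n\ge 2$ be an integer, let $\log$ denote the base-$2$ logarithm, let $0<\gamma<1/2$, and for every integer $i\ge 0$ define $$\varepsilon^{(i)}=\frac{\gamma^{i+1}}{10\log(n)\,(i+1)^2}.$$ Then for every integer $k\ge 0$, $$\sum_{\substack{i,j\ge 0\\ i+j=k}} \varepsilon^{(i)}\varepsilon^{(j)}+\sum_{\substack{i,j\ge 0\\ i+j=k-1}} \varepsilon^{(i)}\varepsilon^{(j)} \le \frac{\varepsilon^{(k)}}{\log(n)}.$$ (An empty sum, e.g. the second sum when $k=0$, equals $0$.) *)

From Stdlib Require Import Reals.
Open Scope R_scope.

Definition log2 (x : R) : R := ln x / ln 2.

Definition eps (n : nat) (gamma : R) (i : nat) : R :=
  gamma ^ (i + 1) / (10 * log2 (INR n) * (INR (i + 1)) ^ 2).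

Definition conv_sum (n : nat) (gamma : R) (k : nat) : R :=
  sum_f_R0 (fun i => eps n gamma i * eps n gamma (k - i)) k.

Definition conv_sum_pred (n : nat) (gamma : R) (k : nat) : R :=
  match k with
  | O => 0
  | S k' => conv_sum n gamma k'
  end.

(* Up to the factor gamma^(k+2) / (10 log n)^2, the first sum is the
   convolution T_k of i |-> 1/(i+1)^2 with itself.  From
   1/(a^2 b^2) <= 2 (1/a^2 + 1/b^2) / (a+b)^2 and sum_i 1/(i+1)^2 <= 5/3 one
   gets T_k <= (20/3) / (k+2)^2, i.e. the first sum is at most
   (2/3) eps^(k+1) / log n and the second at most (2/3) eps^(k) / log n.
   Since eps^(k+1) <= gamma eps^(k) and gamma < 1/2, the total is at most
   (2/3)(3/2) eps^(k) / log n. *)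

From Stdlib Require Import Reals Lra Lia Psatz.
Open Scope R_scope.

Lemma sum_f_R0_rev (f : nat -> R) (k : nat) :
  sum_f_R0 (fun i => f (k - i)%nat) k = sum_f_R0 f k.
Proof.
  induction k as [|k IH]; [reflexivity|].
  rewrite decomp_sum by lia; simpl pred.
  rewrite (sum_eq _ (fun i => f (k - i)%nat)) by (intros; reflexivity).
  rewrite IH, Nat.sub_0_r; simpl; lra.
Qed.

Definition recip_sq (i : nat) : R := 1 / INR (i + 1) ^ 2.

Lemma sum_recip_sq_le (k : nat) :
  sum_f_R0 recip_sq k <= 5 / 3 - 1 / (INR k + 3 / 2).
Proof.
  induction k as [|k IH]; [unfold recip_sq; simpl; lra|].
  simpl sum_f_R0; unfold recip_sq at 2.
  rewrite Nat.add_1_r, !S_INR.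
  pose proof (pos_INR k) as Hk.
  assert (telescope :
    1 / (INR k + 1 + 1) ^ 2 <= 1 / (INR k + 3 / 2) - 1 / (INR k + 1 + 3 / 2)).
  { assert (Hgap : 1 / (INR k + 3 / 2) - 1 / (INR k + 1 + 3 / 2)
                   - 1 / (INR k + 1 + 1) ^ 2
                   = 1 / 4 / ((INR k + 3 / 2) * (INR k + 5 / 2) * (INR k + 2) ^ 2))
      by (field; lra).
    assert (0 < 1 / 4 / ((INR k + 3 / 2) * (INR k + 5 / 2) * (INR k + 2) ^ 2)).
    { apply Rdiv_lt_0_compat; [lra|].
      repeat apply Rmult_lt_0_compat; try apply pow_lt; lra. }
    lra. }
  lra.
Qed.

Lemma sum_recip_sq_le_5_3 (k : nat) : sum_f_R0 recip_sq k <= 5 / 3.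
Proof.
  pose proof (sum_recip_sq_le k); pose proof (pos_INR k).
  assert (0 < 1 / (INR k + 3 / 2)) by (apply Rdiv_lt_0_compat; lra).
  lra.
Qed.

Definition recip_sq_conv (k : nat) : R :=
  sum_f_R0 (fun i => recip_sq i * recip_sq (k - i)) k.

Lemma inv_sq_mul_le (a b : R) : 0 < a -> 0 < b ->
  1 / a ^ 2 * (1 / b ^ 2) <= (1 / a ^ 2 + 1 / b ^ 2) * (2 / (a + b) ^ 2).
Proof.
  intros Ha Hb.
  assert (Hgap : (1 / a ^ 2 + 1 / b ^ 2) * (2 / (a + b) ^ 2) - 1 / a ^ 2 * (1 / b ^ 2)
                 = (a - b) ^ 2 / (a ^ 2 * b ^ 2 * (a + b) ^ 2)) by (field; lra).
  assert (0 <= (a - b) ^ 2 / (a ^ 2 * b ^ 2 * (a + b) ^ 2)).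
  { apply Rmult_le_pos; [apply pow2_ge_0|].
    apply Rlt_le, Rinv_0_lt_compat.
    apply Rmult_lt_0_compat; [apply Rmult_lt_0_compat|]; apply pow_lt; lra. }
  lra.
Qed.

Lemma recip_sq_conv_scaled_le (k : nat) :
  recip_sq_conv k * INR (k + 2) ^ 2 <= 20 / 3.
Proof.
  assert (Hk2 : 0 < INR (k + 2)) by (apply lt_0_INR; lia).
  set (c := 2 / INR (k + 2) ^ 2).
  assert (termwise : recip_sq_conv k
            <= sum_f_R0 (fun i => (recip_sq i + recip_sq (k - i)) * c) k).
  { apply sum_Rle; intros i Hi; unfold c, recip_sq.
    replace (INR (k + 2)) with (INR (i + 1) + INR (k - i + 1))
      by (rewrite <- plus_INR; f_equal; lia).
    apply inv_sq_mul_le; apply lt_0_INR; lia. }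
  rewrite <- scal_sum, plus_sum, sum_f_R0_rev in termwise.
  pose proof (sum_recip_sq_le_5_3 k).
  assert (Hc : c * INR (k + 2) ^ 2 = 2) by (unfold c; field; lra).
  assert (0 < INR (k + 2) ^ 2) by (apply pow_lt; lra).
  nra.
Qed.

Lemma log2_INR_pos (n : nat) : (2 <= n)%nat -> 0 < log2 (INR n).
Proof.
  intros Hn. unfold log2.
  assert (ln_pos : forall x, 1 < x -> 0 < ln x)
    by (intros x Hx; rewrite <- ln_1; apply ln_increasing; lra).
  apply Rdiv_lt_0_compat; apply ln_pos; [|lra].
  apply (lt_INR 1); lia.
Qed.

Section Eps.

Variables (n : nat) (gamma : R).
Hypothesis gamma_ge0 : 0 <= gamma.
Hypothesis log2n_pos : 0 < log2 (INR n).

Lemma eps_ge0 (k : nat) : 0 <= eps n gamma k.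
Proof.
  apply Rmult_le_pos; [now apply pow_le|].
  apply Rlt_le, Rinv_0_lt_compat.
  assert (0 < INR (k + 1)) by (apply lt_0_INR; lia).
  apply Rmult_lt_0_compat; [lra|]. now apply pow_lt.
Qed.

Lemma eps_succ_le (k : nat) : eps n gamma (S k) <= gamma * eps n gamma k.
Proof.
  unfold eps.
  assert (Hk1 : 0 < INR (k + 1)) by (apply lt_0_INR; lia).
  replace (INR (S k + 1)) with (INR (k + 1) + 1) by (rewrite <- S_INR; f_equal; lia).
  replace (gamma ^ (S k + 1)) with (gamma * gamma ^ (k + 1)) by (simpl; ring).
  rewrite <- Rmult_div_assoc.
  apply Rmult_le_compat_l; [assumption|].
  apply Rmult_le_compat_l; [now apply pow_le|].
  apply Rinv_le_contravar; [apply Rmult_lt_0_compat; [lra|now apply pow_lt]|].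
  apply Rmult_le_compat_l; [lra|].
  apply pow_incr; lra.
Qed.

Lemma conv_sum_eq (k : nat) :
  conv_sum n gamma k
  = recip_sq_conv k * INR (k + 2) ^ 2 / 10 * (eps n gamma (S k) / log2 (INR n)).
Proof.
  unfold conv_sum.
  replace (recip_sq_conv k * INR (k + 2) ^ 2 / 10 * (eps n gamma (S k) / log2 (INR n))) with
    (INR (k + 2) ^ 2 / 10 * (eps n gamma (S k) / log2 (INR n)) * recip_sq_conv k)
    by (unfold Rdiv; ring).
  unfold recip_sq_conv; rewrite scal_sum.
  apply sum_eq; intros i Hi; unfold eps, recip_sq.
  replace (gamma ^ (S k + 1)) with (gamma ^ (i + 1) * gamma ^ (k - i + 1))
    by (rewrite <- pow_add; f_equal; lia).
  replace (INR (S k + 1)) with (INR (k + 2)) by (f_equal; lia).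
  assert (0 < INR (i + 1)) by (apply lt_0_INR; lia).
  assert (0 < INR (k - i + 1)) by (apply lt_0_INR; lia).
  assert (0 < INR (k + 2)) by (apply lt_0_INR; lia).
  field; repeat split; lra.
Qed.

Lemma conv_sum_le (k : nat) :
  conv_sum n gamma k <= 2 / 3 * (eps n gamma (S k) / log2 (INR n)).
Proof.
  rewrite conv_sum_eq.
  apply Rmult_le_compat_r.
  - apply Rle_mult_inv_pos; [apply eps_ge0 | assumption].
  - pose proof (recip_sq_conv_scaled_le k); lra.
Qed.

Lemma conv_sum_pred_le (k : nat) :
  conv_sum_pred n gamma k <= 2 / 3 * (eps n gamma k / log2 (INR n)).
Proof.
  destruct k as [|k]; [|apply conv_sum_le].
  simpl. apply Rmult_le_pos; [lra|].
  apply Rle_mult_inv_pos; [apply eps_ge0 | assumption].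
Qed.

End Eps.

Theorem lemma2p3 (n : nat) (gamma : R) (k : nat) :
  (2 <= n)%nat -> 0 < gamma -> gamma < 1 / 2 ->
  conv_sum n gamma k + conv_sum_pred n gamma k <= eps n gamma k / log2 (INR n).
Proof.
  intros Hn Hg0 Hg1.
  pose proof (log2_INR_pos n Hn) as HL.
  assert (Hg : 0 <= gamma) by lra.
  pose proof (conv_sum_le n gamma Hg HL k) as Hfirst.
  pose proof (conv_sum_pred_le n gamma Hg HL k) as Hsecond.
  assert (Hstep : eps n gamma (S k) / log2 (INR n)
                  <= gamma * (eps n gamma k / log2 (INR n))).
  { rewrite Rmult_div_assoc.
    apply Rmult_le_compat_r; [now apply Rlt_le, Rinv_0_lt_compat|].
    now apply eps_succ_le. }
  assert (0 <= eps n gamma k / log2 (INR n))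
    by (apply Rle_mult_inv_pos; [now apply eps_ge0 | assumption]).
  nra.
Qed.
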